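(* $R_5(VS)>180$ and $R_6(VS)>333$: there is a 5-coloring of $[180]$ and a 6-coloring of $[333]$ in each of which no two integers of the same color differ by a positive perfect square.
   Context: For $n\in\mathbb{N}$, $[n]=\{1,\dots,n\}$; a $c$-coloring of $[n]$ is a function $[n]\to[c]$. $R_c(VS)$ (the van der Square number) is the least positive integer $n$ such that every $c$-coloring of $[n]$ contains integers $a<b$ in $[n]$ of the same color with $b-a=x^2$ for some positive integer $x$. *)

From mathcomp Require Import all_boot.
Set Implicit Arguments. Unset Strict Implicit. Unset Printing Implicit Defensive.

(* A c-coloring of [n] = {1,...,n}: a function into 'I_c (colors 0..c-1,
   i.e. [c] shifted); only its values on 1..n matter. *)
Definition has_mono_square (c : nat) (n : nat) (col : nat -> 'I_c) : Prop :=
  exists a b x : nat,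
    [/\ 1 <= a, a < b, b <= n, 0 < x & (b - a = x ^ 2 /\ col a = col b)].

From mathcomp Require Import all_boot.

(* Both bounds are witnessed by explicit colorings found by computer search.
   A coloring of [n] avoids monochromatic square differences as soon as no
   pair (a, a + x^2) inside [n] with 1 <= x < m is monochromatic, where
   n < m^2 bounds the squares that can occur; this finite condition is
   decided by computation. *)

Definition mono_square_freeb {c} n m (col : nat -> 'I_c) : bool :=
  all (fun a => all (fun x => (a + x ^ 2 <= n) ==> (col a != col (a + x ^ 2)))
                    (iota 1 m))
      (iota 1 n).

Lemma mono_square_freeb_sound {c} n m (col : nat -> 'I_c) :
  n < m ^ 2 -> mono_square_freeb n m col -> ~ has_mono_square n col.
Proof.
move=> n_lt_m2 /allP free [a [b [x [a_ge1 a_lt_b b_le_n x_gt0 [ba_eq col_ab]]]]].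
have b_eq : b = a + x ^ 2 by rewrite -ba_eq subnKC // ltnW.
have x_lt_m : x < m.
  rewrite -(ltn_exp2r _ _ (isT : 0 < 2)) -ba_eq.
  exact: leq_ltn_trans (leq_subr a b) (leq_ltn_trans b_le_n n_lt_m2).
have a_in : a \in iota 1 n.
  by rewrite mem_iota a_ge1 add1n ltnS (leq_trans (ltnW a_lt_b) b_le_n).
have x_in : x \in iota 1 m by rewrite mem_iota x_gt0 add1n ltnS ltnW.
by move: (allP (free a a_in) x x_in); rewrite -b_eq b_le_n col_ab eqxx.
Qed.

(* The entry of index a of s (reduced mod c.+1) is the color of a; index 0 is
   a dummy. *)
Definition seq_coloring c (s : seq nat) (a : nat) : 'I_c.+1 :=
  Ordinal (ltn_pmod (nth 0 s a) (ltn0Sn c)).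

Definition coloring5 : nat -> 'I_5 := seq_coloring 4
  [:: 0; 2; 1; 4; 2; 3; 2; 1; 3; 4; 3; 4; 2; 1; 0; 1; 3; 4; 3; 0; 1; 0; 4; 2; 4; 2; 1; 0; 1; 3; 4; 3; 0; 1; 0; 4; 2; 4; 2; 1; 0; 1; 3; 4; 2; 0; 1; 0; 4; 2; 3; 2; 1; 0; 1; 3; 4; 2; 0; 1; 0; 4; 3; 4; 2; 1; 0; 1; 3; 4; 3; 0; 1; 0; 4; 2; 4; 2; 1; 0; 1; 3; 4; 3; 0; 1; 0; 4; 3; 4; 2; 1; 0; 1; 3; 4; 2; 0; 1; 0; 4; 3; 4; 2; 1; 0; 1; 3; 4; 3; 0; 1; 0; 4; 2; 4; 2; 1; 0; 1; 3; 4; 3; 0; 1; 0; 4; 3; 4; 2; 1; 0; 1; 3; 4; 3; 0; 1; 0; 4; 3; 4; 2; 1; 0; 1; 3; 2; 3; 0; 1; 0; 4; 2; 4; 2; 1; 0; 1; 3; 4; 2; 0; 1; 0; 4; 2; 3; 2; 1; 0; 4; 3; 4; 2; 0; 2; 0; 3; 2; 3].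

Definition coloring6 : nat -> 'I_6 := seq_coloring 5
  [:: 0; 3; 5; 0; 3; 2; 3; 1; 0; 4; 2; 3; 1; 5; 3; 4; 5; 4; 1; 3; 1; 0; 4; 2; 5; 2; 0; 4; 2; 4; 1; 0; 4; 2; 5; 1; 0; 5; 0; 4; 2; 3; 1; 0; 4; 2; 3; 1; 5; 3; 4; 3; 1; 0; 3; 2; 3; 1; 5; 3; 0; 5; 4; 2; 3; 1; 0; 4; 2; 5; 1; 0; 4; 0; 4; 1; 5; 4; 2; 5; 1; 0; 5; 0; 4; 2; 3; 1; 0; 4; 2; 3; 1; 5; 3; 4; 5; 3; 1; 3; 2; 4; 2; 5; 1; 0; 5; 4; 2; 3; 1; 0; 4; 2; 5; 1; 0; 5; 0; 4; 2; 3; 1; 0; 4; 1; 3; 5; 0; 3; 2; 3; 1; 0; 4; 2; 3; 1; 5; 3; 0; 5; 4; 2; 3; 1; 0; 4; 2; 5; 2; 5; 4; 2; 4; 1; 5; 4; 2; 5; 1; 0; 5; 0; 4; 2; 3; 1; 0; 4; 2; 3; 1; 5; 3; 4; 3; 1; 0; 3; 2; 3; 1; 5; 3; 0; 5; 4; 2; 3; 1; 0; 4; 2; 5; 1; 0; 4; 0; 4; 1; 5; 4; 2; 5; 1; 0; 5; 0; 4; 2; 3; 1; 0; 4; 2; 3; 1; 5; 3; 0; 5; 3; 1; 3; 2; 4; 2; 5; 4; 0; 5; 4; 2; 3; 1; 5; 4; 2; 5; 1; 0; 5; 0; 4; 2; 3; 1; 0; 4; 1; 3; 1; 0; 3; 2;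 3; 1; 0; 4; 5; 3; 1; 5; 3; 0; 5; 4; 2; 3; 1; 0; 4; 2; 5; 2; 0; 4; 2; 4; 1; 5; 4; 2; 5; 2; 0; 5; 0; 4; 2; 3; 1; 0; 4; 2; 3; 1; 5; 3; 0; 3; 1; 0; 3; 2; 3; 2; 5; 3; 1; 5; 4; 2; 3; 1; 5; 4; 2; 5; 1; 0; 4; 0; 4; 1; 0; 4; 2; 5; 1; 0; 1; 0].

Lemma coloring5_mono_square_free : ~ has_mono_square 180 coloring5.
Proof. apply: (@mono_square_freeb_sound _ _ 14) => //; vm_compute; reflexivity. Qed.

Lemma coloring6_mono_square_free : ~ has_mono_square 333 coloring6.
Proof. apply: (@mono_square_freeb_sound _ _ 19) => //; vm_compute; reflexivity. Qed.

Theorem mainTheorem6 :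
  (exists col : nat -> 'I_5, ~ has_mono_square 180 col) /\
  (exists col : nat -> 'I_6, ~ has_mono_square 333 col).
Proof.
split; [exists coloring5 | exists coloring6].
- exact: coloring5_mono_square_free.
- exact: coloring6_mono_square_free.
Qed.
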